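(* Let $K$ be a complex K3 surface with $\mathrm{Pic}(K)=\mathbb{Z}h$ and $h^2=2d$. Let $\alpha\in Br(K)_2$ and let $B\in\frac12H^2(K,\mathbb{Z})\subset H^2(K,\mathbb{Q})$ be a B-field representing $\alpha$. If $4Bh+h^2\equiv 0\pmod 4$, then $B^2 \bmod \mathbb{Z}$ is an invariant of $\alpha$, i.e. it is the same for every B-field representative of $\alpha$.
   Context: A B-field representative of $\alpha\in Br(K)_2=H^2(K,\mathcal{O}_K^* )_{2}$ is a class $B\in\frac12 H^2(K,\mathbb{Z})$ whose image in $H^2(K,\mathcal{O}_K)$ maps to $\alpha$ via the exponential sequence; two B-fields represent the same class iff they differ by an element of $H^2(K,\mathbb{Z})+\frac12\mathrm{Pic}(K)$. Intersection numbers are extended $\mathbb{Q}$-bilinearly. *)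

From mathcomp Require Import all_boot all_order all_algebra.
Set Implicit Arguments. Unset Strict Implicit. Unset Printing Implicit Defensive.
Import Order.TTheory GRing.Theory Num.Theory.
Local Open Scope ring_scope.

(* The K3 lattice Lambda = U^3 (+) E8(-1)^2, rank 22.  For a complex K3
   surface K, H^2(K,Z) with its cup product is isometric to Lambda; we
   identify H^2(K,Z) with Lambda = 'rV[int]_22 with the Gram matrix below.
   Coordinates 0..5: three hyperbolic planes U (pairs {0,1},{2,3},{4,5});
   coordinates 6..13 and 14..21: two copies of E8(-1). *)

Definition e8_edge (a b : nat) : bool :=
  ((a.+1 == b) && (b <= 6)%N) || ((b.+1 == a) && (a <= 6)%N) ||
  ((a == 2%N) && (b == 7%N)) || ((a == 7%N) && (b == 2%N)).

Definition k3_entry (i j : nat) : int :=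
  if (i < 6)%N && (j < 6)%N then
    (if (i %/ 2 == j %/ 2)%N && (i != j) then 1 else 0)
  else if (6 <= i)%N && (6 <= j)%N && ((i - 6) %/ 8 == (j - 6) %/ 8)%N then
    (if i == j then -2
     else if e8_edge ((i - 6) %% 8) ((j - 6) %% 8) then 1 else 0)
  else 0.

Definition k3_gram : 'M[int]_22 := \matrix_(i, j) k3_entry i j.

Definition H2 := 'rV[int]_22.

Definition idot (x y : H2) : int := (x *m k3_gram *m y^T) 0 0.

(* h is primitive in H^2(K,Z) (generator of Pic(K) = Z h is primitive) *)
Definition primitive (h : H2) : Prop :=
  forall (k : int) (v : H2), h = v *~ k -> `|k| = 1.

(* B-fields: an element B of (1/2) H^2(K,Z) subset H^2(K,Q) is encoded by
   its double b = 2B in H^2(K,Z).  Intersection numbers extended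
   Q-bilinearly: *)
Definition Bsq (b : H2) : rat := (idot b b)%:~R / 4.
Definition Bdot (b x : H2) : rat := (idot b x)%:~R / 2.
Definition isq (x : H2) : rat := (idot x x)%:~R.

(* Two B-fields B = b/2, B' = b'/2 represent the same Brauer class in
   Br(K)_2 iff B' - B in H^2(K,Z) + 1/2 Pic(K) = H^2(K,Z) + 1/2 Z h,
   i.e. b' = b + 2x + k h with x in H^2(K,Z), k in Z. *)
Definition same_brauer_class (h b b' : H2) : Prop :=
  exists (x : H2) (k : int), b' = b + x *+ 2 + h *~ k.

From mathcomp Require Import all_boot all_order all_algebra ring lra zify.
Import Order.TTheory GRing.Theory Num.Theory.
Local Open Scope ring_scope.

(* If B' = B + x + (k/2) h with x integral, then
     B'^2 - B^2 = 2 B.x + x^2 + k x.h + k (4 B.h + h^2) / 4 + k (k - 1) h^2 / 4.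
   The first three terms are integers, the fourth is one by the hypothesis
   4 B.h + h^2 = 0 mod 4, and the last because k (k - 1) and h^2 = 2d are both
   even. *)

Lemma e8_edge_sym a b : e8_edge a b = e8_edge b a.
Proof.
rewrite /e8_edge.
move: (a.+1 == b) (b.+1 == a) (b <= 6)%N (a <= 6)%N.
move: (a == 2)%N (b == 7)%N (a == 7)%N (b == 2)%N.
by do 8 case.
Qed.

Lemma k3_entry_sym i j : k3_entry i j = k3_entry j i.
Proof.
rewrite /k3_entry [(j < 6)%N && _]andbC [(j %/ 2 == _)%N]eq_sym (eq_sym j i).
by rewrite [(6 <= j)%N && _]andbC [((j - 6) %/ 8 == _)%N]eq_sym e8_edge_sym.
Qed.

Lemma tr_k3_gram : k3_gram^T = k3_gram.
Proof. by apply/matrixP=> i j; rewrite !mxE k3_entry_sym. Qed.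

Lemma idotC x y : idot x y = idot y x.
Proof.
have tr11 (A : 'M[int]_1) : A 0 0 = A^T 0 0 by rewrite mxE.
by rewrite /idot tr11 !trmx_mul trmxK tr_k3_gram mulmxA.
Qed.

Lemma idotDl x y z : idot (x + y) z = idot x z + idot y z.
Proof. by rewrite /idot !mulmxDl mxE. Qed.

Lemma idotDr x y z : idot z (x + y) = idot z x + idot z y.
Proof. by rewrite idotC idotDl !(idotC z). Qed.

Lemma idotMzl x y k : idot (x *~ k) y = idot x y * k.
Proof. by rewrite /idot -!scaler_int -!scalemxAl mxE intz mulrC. Qed.

Lemma idotMzr x y k : idot y (x *~ k) = idot y x * k.
Proof. by rewrite idotC idotMzl idotC. Qed.

Lemma idot_shift_sub b x h k :
  let b' := b + x *+ 2 + h *~ k in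
  idot b' b' - idot b b =
    4 * (idot b x + idot x x + k * idot x h)
    + k * (2 * idot b h + idot h h) + k * (k - 1) * idot h h.
Proof.
rewrite /= mulr2n !(idotDl, idotDr, idotMzl, idotMzr).
by rewrite (idotC x b) (idotC h b) (idotC h x); ring.
Qed.

Lemma dvdz2_mul_pred (k : int) : (2 %| k * (k - 1))%Z.
Proof.
have [k_even | k_odd] : (2 %| k)%Z \/ (2 %| k - 1)%Z by lia.
  exact: dvdz_mulr.
exact: dvdz_mull.
Qed.

Lemma dvdz4_idot_shift_sub b x h k :
  (4 %| 2 * idot b h + idot h h)%Z -> (2 %| idot h h)%Z ->
  let b' := b + x *+ 2 + h *~ k in (4 %| idot b' b' - idot b b)%Z.
Proof.
move=> dvd_bh dvd_hh /=; rewrite idot_shift_sub.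
apply: rpredD; first apply: rpredD.
- exact: dvdz_mulr (dvdzz 4).
- exact: dvdz_mull.
- by rewrite (_ : 4 = 2 * 2) // dvdz_mul ?dvdz2_mul_pred.
Qed.

Lemma Bsq_subr_int b b' :
  (4 %| idot b' b' - idot b b)%Z -> exists m : int, Bsq b' - Bsq b = m%:~R.
Proof.
move=> /divzK dvd4; exists ((idot b' b' - idot b b) %/ 4)%Z.
rewrite /Bsq -mulrBl -rmorphB -[in LHS]dvd4 rmorphM /=.
by rewrite mulfK // intr_eq0.
Qed.

Lemma dvdz4_Bdot_isq b h :
  (exists n : int, 4 * Bdot b h + isq h = 4 * n%:~R) ->
  (4 %| 2 * idot b h + idot h h)%Z.
Proof.
case=> n eq_n; apply/dvdzP; exists n; apply: (@intr_inj rat).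
move: eq_n; rewrite /Bdot /isq rmorphD !rmorphM /=; lra.
Qed.

Theorem lemma2p1 (d : int) (h : H2)
  (hprim : primitive h) (hpos : 0 < d) (hsq : idot h h = 2 * d)
  (b : H2) (* B = b/2 is a B-field representing alpha *)
  (hcong : exists n : int, 4 * Bdot b h + isq h = 4 * n%:~R) :
  forall b' : H2, same_brauer_class h b b' ->
    exists m : int, Bsq b' - Bsq b = m%:~R.
Proof.
move=> _ [x [k ->]]; apply: Bsq_subr_int.
apply: dvdz4_idot_shift_sub; first exact: dvdz4_Bdot_isq.
by rewrite hsq dvdz_mulr.
Qed.
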